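(* Let $\mathrm{FiF}$ and $\mathrm{OFF}$ be as in the context, serving $q_1,\dots,q_T$ with cache size $k$. For $1\le t\le T$ let $\mathrm{Bel}_t,\mathrm{Off}_t\in\{0,1\}$ be the number of pages fetched by $\mathrm{FiF}$ and by $\mathrm{OFF}$, respectively, when serving $q_t$. Then for every $1\le t\le T$, $$\mathrm{Bel}_t+\Phi(t+1)-\Phi(t)\le \mathrm{Off}_t,$$ and $\Phi(t)\ge 0$ for all $t$. Consequently the total number of fetches of $\mathrm{FiF}$ is at most that of $\mathrm{OFF}$ plus $\Phi(1)$.
   Context: Unweighted paging with a universe $U$ of $n$ pages, cache size $k<n$, and request sequence $q_1,\dots,q_T$. Fix a total order on $U$. For $1\le t\le T+1$, $\mathrm{rank}(\cdot,t)$ is the bijection $U\to\{1,\dots,n\}$ obtained by ordering pages increasingly by the time of their next request in $\{t,\dots,T\}$, with pages not requested in $\{t,\dots,T\}$ placed last, in the fixed order (so $\mathrm{rank}(q_t,t)=1$). $\mathrm{FiF}$ always holds exactly $k$ pages; on a request $q_t$ not in its cache it loads $q_t$ and evicts the page of its cache with the largest $\mathrm{rank}(\cdot,t)$. $\mathrm{OFF}$ is an arbitrary algorithm always holding exactly $k$ pages and containing $q_t$ after serving it. Let $C(t)$, $C^*(t)$ be the caches of $\mathrm{FiF}$ and $\mathrm{OFF}$ just before request $q_t$ is served (for $t=T+1$: after serving $q_T$). Let $n(s,t)=|\{p\in C(t):\mathrm{rank}(p,t)\ge s\}|$, $n^*(s,t)=|\{p\in C^*(t):\mathrm{rank}(p,t)\ge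 s\}|$, and $\Phi(t)=\max_{1\le s\le n}\big(n(s,t)-n^*(s,t)\big)$. *)

(* Pages are 'I_n; the fixed total order on U is the natural
   order of ordinals (any finite totally ordered U is isomorphic to this). *)
From mathcomp Require Import all_boot all_order all_algebra.
Set Implicit Arguments. Unset Strict Implicit. Unset Printing Implicit Defensive.
Import Order.TTheory GRing.Theory Num.Theory.

(* Requests are q 1, ..., q T (values of q outside [1,T] are never read). *)

(* time of the next request of p in {t,...,T}; T.+1 if p is not requested *)
Definition nextreq n (q : nat -> 'I_n) (T t : nat) (p : 'I_n) : nat :=
  head T.+1 [seq t' <- iota t (T.+1 - t) | q t' == p].

(* rank(p,t) in {1,...,n}: order pages increasingly by next request time,
   ties (only among pages not requested in {t..T}) broken by the fixed order *)
Definition rank n (q : nat -> 'I_n) (T t : nat) (p : 'I_n) : nat :=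
  #|[set p' : 'I_n | (nextreq q T t p' < nextreq q T t p)
                     || ((nextreq q T t p' == nextreq q T t p) && (p' < p))]|.+1.

Definition ncount n (q : nat -> 'I_n) (T : nat) (C : {set 'I_n}) (s t : nat)
  : nat := #|[set p in C | s <= rank q T t p]|.

Definition Phi n (q : nat -> 'I_n) (T : nat) (C Cs : {set 'I_n}) (t : nat)
  : int :=
  let d s := ((ncount q T C s t)%:Z - (ncount q T Cs s t)%:Z)%R in
  \big[Num.max/d 1%N]_(1 <= s < n.+1) d s.

Definition fetched n (A B : {set 'I_n}) : nat := #|B :\: A|.

Definition fif_step n (q : nat -> 'I_n) (T t : nat) (A B : {set 'I_n}) : Prop :=
  if q t \in A then B = A
  else exists e, [/\ e \in A,
                    (forall p, p \in A -> rank q T t p <= rank q T t e)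
                  & B = q t |: (A :\ e)].

From mathcomp Require Import all_boot all_order all_algebra zify.
Import Order.TTheory GRing.Theory Num.Theory.

(* The rank at time t is induced by a strict total order [precedes t] on
   pages (earlier next request first, ties broken by the index), so every
   rank lies in {1,...,n} and the page requested at t has rank 1.  Passing
   from time t to t+1 only moves q t from rank 1 to its new position, hence
   for a cache containing q t the counting function n(s,t+1) is a shift of
   n(.,t) (lemma [ncount_succ]).

   The potential Phi is the maximum of the gaps
     gap(s) = n(s,t) - n*(s,t);
   it is nonnegative since gap(1) = |C| - |C*| = 0.  One request is analysed
   at the fixed time t: OFF's change of cache lowers each n*(s,t) by at most
   its number of fetches, and on a fault FiF lowers every nonzero n(s,t),
   s >= 2, by one ([fif_ncount_fault]).  This bounds every gap after the
   request by Phi(t) - Bel_t + Off_t ([gap_served]); the shift lemma turns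
   this into the bound on Phi(t+1) ([potential_step]).  Summing the
   amortized inequality by telescoping ([telescope_le]) gives the total
   bound, using Phi(T+1) >= 0. *)

Set Implicit Arguments.
Unset Strict Implicit.
Unset Printing Implicit Defensive.

Section Ranking.
Variables (n : nat) (q : nat -> 'I_n) (T : nat).

Definition precedes (t : nat) (a b : 'I_n) : bool :=
  (nextreq q T t a < nextreq q T t b)
  || ((nextreq q T t a == nextreq q T t b) && (a < b)).

Lemma rankE t p : rank q T t p = #|[set p' | precedes t p' p]|.+1.
Proof. by []. Qed.

Lemma precedes_irr t a : ~~ precedes t a a.
Proof. by rewrite /precedes ltnn eqxx ltnn. Qed.

Lemma precedes_trans t a b c :
  precedes t a b -> precedes t b c -> precedes t a c.
Proof. rewrite /precedes; case: ltngtP; case: ltngtP => //=; lia. Qed.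

Lemma precedes_total t a b : a != b -> precedes t a b || precedes t b a.
Proof.
move=> neq_ab; rewrite /precedes.
case: ltngtP => //= _; case: ltngtP => //= /val_inj eq_ab.
by rewrite eq_ab eqxx in neq_ab.
Qed.

Lemma precedes_asym t a b : a != b -> precedes t b a = ~~ precedes t a b.
Proof.
move=> neq; case ab: (precedes t a b) => /=.
  by apply/negP => ba; have := precedes_irr t a; rewrite (precedes_trans ab ba).
by have := precedes_total t neq; rewrite ab.
Qed.

Lemma precedes_rank t a b : precedes t a b -> rank q T t a < rank q T t b.
Proof.
move=> ab; rewrite !rankE ltnS; apply: proper_card; apply/properP; split.
- by apply/subsetP => x; rewrite !inE => /precedes_trans; apply.
- by exists a; rewrite !inE ?ab // precedes_irr.
Qed.

(* Ranks lie in {1,...,n}: a page does not precede itself. *)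
Lemma rank_le t p : rank q T t p <= n.
Proof.
have sub : [set p' | precedes t p' p] \subset [set~ p].
  by apply/subsetP => x; rewrite !inE; apply: contraTneq => ->; rewrite precedes_irr.
have := ltn_ord p; have := subset_leq_card sub; rewrite rankE cardsC1 card_ord; lia.
Qed.

Lemma nextreq_ge t p : t <= T.+1 -> t <= nextreq q T t p.
Proof.
rewrite /nextreq; case E: [seq _ <- _ | _] => [//|x s] _ /=.
have : x \in [seq t' <- iota t (T.+1 - t) | q t' == p] by rewrite E inE eqxx.
by rewrite mem_filter mem_iota => /andP[_ /andP[]].
Qed.

Section Request.
Variable t : nat.
Hypothesis t_le_T : t <= T.

Lemma iota_req : iota t (T.+1 - t) = t :: iota t.+1 (T.+1 - t.+1).
Proof. by have -> : T.+1 - t = (T.+1 - t.+1).+1 by lia. Qed.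

Lemma nextreq_req : nextreq q T t (q t) = t.
Proof. by rewrite /nextreq iota_req /= eqxx. Qed.

Lemma nextreq_succ p : p != q t -> nextreq q T t p = nextreq q T t.+1 p.
Proof. by move=> neq; rewrite /nextreq iota_req /= eq_sym (negbTE neq). Qed.

Lemma precedes_req p : precedes t (q t) p = (p != q t).
Proof.
rewrite /precedes nextreq_req; have [->|neq] := eqVneq p (q t).
  by rewrite nextreq_req ltnn eqxx ltnn.
by rewrite nextreq_succ // nextreq_ge.
Qed.

Lemma precedes_to_req p : ~~ precedes t p (q t).
Proof.
have [->|neq] := eqVneq p (q t); first exact: precedes_irr.
by rewrite precedes_asym 1?eq_sym // precedes_req neq.
Qed.

Lemma rank_req : rank q T t (q t) = 1.
Proof.
rewrite rankE; apply/eqP; rewrite eqSS cards_eq0; apply/eqP/setP => x.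
by rewrite !inE (negbTE (precedes_to_req x)).
Qed.

Lemma rank_ge2 p : (2 <= rank q T t p) = (p != q t).
Proof.
have [->|neq] := eqVneq p (q t); first by rewrite rank_req.
by have := @precedes_rank t (q t) p; rewrite rank_req precedes_req neq; apply.
Qed.

(* Every page p other than [q t] has [q t] as a predecessor at time [t];
   at time [t.+1] the other predecessors are unchanged, and [q t] is one
   only if it still precedes p. *)
Lemma rank_succ p : p != q t ->
  rank q T t p = rank q T t.+1 p + ~~ precedes t.+1 (q t) p.
Proof.
move=> neq.
have pred_req : [set x | precedes t x p]
    = q t |: ([set x | precedes t.+1 x p] :\ q t).
  apply/setP => x; rewrite !inE; have [->|neqx] := eqVneq x (q t).
    by rewrite precedes_req neq.
  by rewrite /precedes !nextreq_succ.
have := cardsD1 (q t) [set x | precedes t.+1 x p].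
rewrite !rankE pred_req cardsU1 !inE eqxx /=.
by move=> ->; case: (precedes t.+1 (q t) p) => /=; lia.
Qed.

(* For a cache containing [q t], the counting function at time [t.+1] is a
   shift of the one at time [t]: thresholds up to the new rank of [q t]
   move by one (and [q t] itself is counted), the others stay. *)
Lemma ncount_succ (X : {set 'I_n}) s : 0 < s -> q t \in X ->
  ncount q T X s t.+1 =
  if s <= rank q T t.+1 (q t) then (ncount q T X s.+1 t).+1
  else ncount q T X s t.
Proof.
move=> s_gt0 qX; rewrite /ncount.
have rank_cmp p : p != q t -> (s <= rank q T t.+1 p) =
    if s <= rank q T t.+1 (q t) then s.+1 <= rank q T t p
    else s <= rank q T t p.
  move=> neq; rewrite rank_succ //.
  have [qp|pq] := boolP (precedes t.+1 (q t) p).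
    by have := precedes_rank qp; case: ifP; lia.
  by move: pq; rewrite -precedes_asym 1?eq_sym // => /precedes_rank; case: ifP; lia.
case: ifP => s_le.
- have -> : [set p in X | s <= rank q T t.+1 p] =
            q t |: [set p in X | s.+1 <= rank q T t p].
    apply/setP => p; rewrite !inE; have [->|neq] := eqVneq p (q t).
      by rewrite qX s_le.
    by rewrite rank_cmp // s_le.
  by rewrite cardsU1 !inE rank_req ltnNge s_gt0 andbF.
- apply: eq_card => p; rewrite !inE; have [->|neq] := eqVneq p (q t).
    by rewrite qX rank_req; move: s_le; rewrite rankE; lia.
  by rewrite rank_cmp // s_le.
Qed.
End Request.
End Ranking.

Section Potential.
Variables (n : nat) (q : nat -> 'I_n) (T : nat).
Implicit Types (A B C Cs X : {set 'I_n}) (t s : nat).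

Definition gap C Cs t s : int :=
  ((ncount q T C s t)%:Z - (ncount q T Cs s t)%:Z)%R.

Lemma ncount1 X t : ncount q T X 1 t = #|X|.
Proof. by apply: eq_card => p; rewrite !inE andbT. Qed.

Lemma ncount_beyond X t : ncount q T X n.+1 t = 0.
Proof.
apply/eqP; rewrite cards_eq0; apply/eqP/setP => p.
by rewrite !inE ltnNge rank_le andbF.
Qed.

Lemma Phi_le C Cs t (M : int) :
  (forall s, 1 <= s <= n.+1 -> (gap C Cs t s <= M)%R) ->
  (Phi q T C Cs t <= M)%R.
Proof.
move=> gap_le; rewrite /Phi big_seq_cond.
apply: bigmax_le => [|s]; first exact: gap_le.
by rewrite mem_index_iota andbT => range_s; apply: gap_le; lia.
Qed.

(* Conversely each such gap is below Phi; gap(n+1) = 0 for caches of equal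
   size since no rank exceeds n. *)
Lemma gap_le_Phi C Cs t s : #|C| = #|Cs| -> 1 <= s <= n.+1 ->
  (gap C Cs t s <= Phi q T C Cs t)%R.
Proof.
move=> eq_card_C /andP[s_ge1 s_le]; have [s_lt|->] : s < n.+1 \/ s = n.+1 by lia.
  by apply: le_bigmax_seq; rewrite // mem_index_iota s_ge1.
apply: le_trans (bigmax_ge_id _ _ _ _).
by rewrite /gap !ncount_beyond !ncount1 eq_card_C !subrr.
Qed.

(* The potential is nonnegative: gap(1) = |C| - |C*| = 0. *)
Lemma Phi_ge0 C Cs t : #|C| = #|Cs| -> (0 <= Phi q T C Cs t)%R.
Proof.
move=> eq_card_C; have := @gap_le_Phi C Cs t 1 eq_card_C.
by rewrite /gap !ncount1 eq_card_C subrr; apply; lia.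
Qed.

(* n(2,t) counts the pages of X other than q t, the only page of rank 1. *)
Lemma ncount2 X t : t <= T -> ncount q T X 2 t = #|X :\ q t|.
Proof. by move=> t_le; apply: eq_card => p; rewrite !inE rank_ge2 // andbC. Qed.

Lemma ncount_fetched A B s t : #|A| = #|B| ->
  ncount q T A s t <= ncount q T B s t + fetched A B.
Proof.
move=> eq_card_AB; rewrite /ncount /fetched.
have sub : [set p in A | s <= rank q T t p] \subset
           [set p in B | s <= rank q T t p] :|: (A :\: B).
  by apply/subsetP => p; rewrite !inE => /andP[-> ->]; case: (p \in B).
have : #|A :\: B| = #|B :\: A| by rewrite !cardsD setIC eq_card_AB.
by have := subset_leq_card sub; rewrite cardsU; lia.
Qed.

Lemma gap_succ C Cs t s : t <= T -> q t \in C -> q t \in Cs ->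
  1 <= s <= n.+1 ->
  exists2 s', 1 <= s' <= n.+1 & gap C Cs t.+1 s = gap C Cs t s'.
Proof.
move=> t_le qC qCs /andP[s_ge1 s_le]; rewrite /gap !ncount_succ //.
case: ifP => [s_le_rank | _]; last by exists s; rewrite ?s_ge1.
exists s.+1; last lia.
by have := rank_le q T t.+1 (q t); lia.
Qed.
End Potential.

Section FiF.
Variables (n : nat) (q : nat -> 'I_n) (T : nat).
Implicit Types (C : {set 'I_n}) (t s : nat).

Lemma fif_card_mem t C C' : fif_step q T t C C' ->
  #|C'| = #|C| /\ q t \in C'.
Proof.
rewrite /fif_step; case: ifP => [_ -> // | qC [e [eC _ ->]]].
by rewrite cardsU1 !inE eqxx qC andbF (cardsD1 e C) eC.
Qed.

Lemma fif_fault_fetched t C e : q t \notin C ->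
  fetched C (q t |: (C :\ e)) = 1.
Proof.
move=> qC; rewrite /fetched -(cards1 (q t)); apply: eq_card => p.
rewrite !inE; have [->|_] := eqVneq p (q t); first by rewrite qC.
by case: (p \in C); rewrite /= ?andbF.
Qed.

Lemma fif_ncount_fault t C e s : t <= T -> q t \notin C -> e \in C ->
  (forall p, p \in C -> rank q T t p <= rank q T t e) -> 2 <= s ->
  let C' := q t |: (C :\ e) in
  ncount q T C' s t = 0 \/ (ncount q T C' s t).+1 = ncount q T C s t.
Proof.
move=> t_le qC eC e_max s_ge2 C'.
have count_C' : [set p in C' | s <= rank q T t p]
    = [set p in C | s <= rank q T t p] :\ e.
  apply/setP => p; rewrite !inE; have [->|neq] := eqVneq p (q t).
    by rewrite (negbTE qC) rank_req //= andbF leqNgt s_ge2.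
  by rewrite /= andbA.
have [s_le_e | e_lt_s] := leqP s (rank q T t e); [right | left].
  by rewrite /ncount count_C' (cardsD1 e [set p in C | _]) !inE eC s_le_e.
rewrite /ncount count_C'; apply/eqP; rewrite cards_eq0; apply/eqP/setP => p.
rewrite !inE; case pC: (p \in C); rewrite ?andbF //=.
by have := e_max p pC; case: (p == e); lia.
Qed.
End FiF.

Section Amortization.
Variables (n : nat) (q : nat -> 'I_n) (T : nat).
Implicit Types (C Cs : {set 'I_n}) (t s : nat).

(* On a fault of FiF, Phi(t) >= 1 - Off_t: gap(2) = |C| - |C* \ {q t}| and
   OFF must hold q t after the request. *)
Lemma Phi_fault_lb t C Cs Cs' : t <= T ->
  #|C| = #|Cs| -> #|Cs| = #|Cs'| -> q t \notin C -> q t \in Cs' ->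
  (1 - (fetched Cs Cs')%:Z <= Phi q T C Cs t)%R.
Proof.
move=> t_le eq_card_C eq_card_Cs qC qCs'.
have range2 : 1 <= 2 <= n.+1 by have := ltn_ord (q t); lia.
have gap2 := gap_le_Phi q T t eq_card_C range2.
have off2 := @ncount_fetched n q T Cs Cs' 2 t eq_card_Cs.
have card_C : #|C :\ q t| = #|C| by rewrite (cardsD1 (q t) C) (negbTE qC).
have card_Cs' : #|Cs'| = #|Cs' :\ q t|.+1 by rewrite (cardsD1 (q t) Cs') qCs'.
by move: gap2 off2; rewrite /gap !ncount2 //; lia.
Qed.

Lemma gap_served t C C' Cs Cs' s : t <= T ->
  #|C| = #|Cs| -> #|Cs| = #|Cs'| -> fif_step q T t C C' -> q t \in Cs' ->
  1 <= s <= n.+1 ->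
  (gap q T C' Cs' t s
     <= Phi q T C Cs t - (fetched C C')%:Z + (fetched Cs Cs')%:Z)%R.
Proof.
move=> t_le eq_card_C eq_card_Cs step qCs' range_s.
have [card_C' _] := fif_card_mem step.
have off := @ncount_fetched n q T Cs Cs' s t eq_card_Cs.
have gap_s := gap_le_Phi q T t eq_card_C range_s.
move: step; rewrite /fif_step; case: ifP => [_ -> | qC [e [eC e_max C'E]]].
  by move: off gap_s; rewrite /fetched setDv cards0 /gap; lia.
have lb := Phi_fault_lb t_le eq_card_C eq_card_Cs (negbT qC) qCs'.
rewrite C'E fif_fault_fetched ?qC // -C'E.
have [-> | s_ge2] : s = 1 \/ 2 <= s by lia.
  by move: lb; rewrite /gap !ncount1 card_C' eq_card_C eq_card_Cs; lia.
have := fif_ncount_fault t_le (negbT qC) eC e_max s_ge2; rewrite -C'E.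
by move: off gap_s lb; rewrite /gap; lia.
Qed.

Lemma potential_step t C C' Cs Cs' : t <= T ->
  #|C| = #|Cs| -> #|Cs| = #|Cs'| -> fif_step q T t C C' -> q t \in Cs' ->
  ((fetched C C')%:Z + Phi q T C' Cs' t.+1 - Phi q T C Cs t
     <= (fetched Cs Cs')%:Z)%R.
Proof.
move=> t_le eq_card_C eq_card_Cs step qCs'.
have [_ qC'] := fif_card_mem step.
suff : (Phi q T C' Cs' t.+1
          <= Phi q T C Cs t - (fetched C C')%:Z + (fetched Cs Cs')%:Z)%R by lia.
apply: Phi_le => s range_s.
have [s' range_s' ->] := gap_succ t_le qC' qCs' range_s.
exact: gap_served.
Qed.
End Amortization.

Lemma telescope_le (T : nat) (a b : nat -> nat) (P : nat -> int) :
  (forall t, 1 <= t <= T -> ((a t)%:Z + P t.+1 - P t <= (b t)%:Z)%R) ->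
  ((\sum_(1 <= t < T.+1) a t)%:Z + P T.+1
     <= (\sum_(1 <= t < T.+1) b t)%:Z + P 1%N)%R.
Proof.
elim: T => [|T IH] step; first by rewrite !big_geq //; lia.
rewrite !(big_nat_recr T.+1) //= !PoszD.
have := step T.+1 (ltac:(lia)); have := IH (fun t t_in => step t (ltac:(lia))).
lia.
Qed.

Theorem mainTheorem11 (n k T : nat) (q : nat -> 'I_n)
    (C Cs : nat -> {set 'I_n}) :
  k < n ->
  #|C 1| = k ->
  (forall t, 1 <= t <= T -> fif_step q T t (C t) (C t.+1)) ->
  (forall t, 1 <= t <= T.+1 -> #|Cs t| = k) ->
  (forall t, 1 <= t <= T -> q t \in Cs t.+1) ->
  (forall t, 1 <= t <= T -> fetched (Cs t) (Cs t.+1) <= 1) ->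
  [/\ (forall t, 1 <= t <= T ->
         ((fetched (C t) (C t.+1))%:Z + Phi q T (C t.+1) (Cs t.+1) t.+1
            - Phi q T (C t) (Cs t) t <= (fetched (Cs t) (Cs t.+1))%:Z)%R),
      (forall t, 1 <= t <= T.+1 -> (0 <= Phi q T (C t) (Cs t) t)%R)
    & ((\sum_(1 <= t < T.+1) fetched (C t) (C t.+1))%:Z
         <= (\sum_(1 <= t < T.+1) fetched (Cs t) (Cs t.+1))%:Z
            + Phi q T (C 1%N) (Cs 1%N) 1%N)%R].
Proof.
move=> _ card_C1 fif card_Cs req_Cs _.
have card_C t : 1 <= t <= T.+1 -> #|C t| = k.
  elim: t => [//|[//|t] IH] /andP[_ t_le].
  have t_in : 1 <= t.+1 <= T by lia.
  by have [-> _] := fif_card_mem (fif _ t_in); apply: IH; lia.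
have step t : 1 <= t <= T ->
    ((fetched (C t) (C t.+1))%:Z + Phi q T (C t.+1) (Cs t.+1) t.+1
       - Phi q T (C t) (Cs t) t <= (fetched (Cs t) (Cs t.+1))%:Z)%R.
  move=> t_in; apply: potential_step; first lia.
  - by rewrite card_C ?card_Cs //; lia.
  - by rewrite !card_Cs //; lia.
  - exact: fif.
  - exact: req_Cs.
have Phi_nonneg t : 1 <= t <= T.+1 -> (0 <= Phi q T (C t) (Cs t) t)%R.
  by move=> t_in; apply: Phi_ge0; rewrite card_C ?card_Cs.
split => //.
have := @telescope_le T (fun t => fetched (C t) (C t.+1))
  (fun t => fetched (Cs t) (Cs t.+1)) (fun t => Phi q T (C t) (Cs t) t) step.
 have := Phi_nonneg T.+1 (ltac:(lia)); lia.
Qed.
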